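(* Let $\Omega=\{0,1\}^{\mathbb{N}}$ with canonical process $X=(X_t)_{t\in\mathbb{N}}$, natural filtration $\mathcal{F}_t=\sigma(X_s,s\le t)$ ($\mathcal{F}_0$ trivial), $\mathcal{F}=\sigma(\bigcup_t\mathcal{F}_t)$. For $n\in\mathbb{N}_0$ let $\mathbb{P}_n$ be the probability measure assigning probability $1/2$ to the all-zeros sequence $0^{\mathbb{N}}$ and probability $1/2$ to the sequence $0^n\,1\,0^{\mathbb{N}}$ (exactly one $1$, at position $n+1$). Let $\mathcal{P}=\{\mathbb{P}_n\}_{n\in\mathbb{N}_0}$ and $A=\{0^{\mathbb{N}}\}$. Then $\nu^*(A)=1/2$, $\mu^*(A)=1$, and $\mu^*(A^c)=1/2$.
   Context: Stopping times are with respect to the filtration above (values in $\mathbb{N}_0\cup\{\infty\}$), $\mathcal{T}$ is the set of all stopping times, and for $B\subseteq\Omega$: $\mu^*(B) = \inf_{\tau\in\mathcal{T}:\, B\subseteq\{\tau<\infty\}} \sup_{\mathbb{P}\in\mathcal{P}} \mathbb{P}(\tau<\infty)$ (the inverse-capital measure), and $\nu^*(B) = \sup_{\mathbb{P}\in\mathcal{P}}\mathbb{P}(B)$ for measurable $B$. *)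

From HB Require Import structures.
From mathcomp Require Import all_boot all_order all_algebra.
From mathcomp Require Import classical_sets boolp functions reals ereal measure.
Set Implicit Arguments. Unset Strict Implicit. Unset Printing Implicit Defensive.
Import Order.TTheory GRing.Theory Num.Theory.
Local Open Scope classical_set_scope.
Local Open Scope ring_scope.

(* Omega = {0,1}^N with N = {1,2,...}; a path w : nat -> bool is read as
   X_{k+1}(w) = w k  (true = 1, false = 0). *)
Definition Omega := nat -> bool.

Definition X (t : nat) (w : Omega) : bool := w t.-1.

Definition F (t : nat) : set (set Omega) :=
  <<s [set [set w : Omega | X sb.1 w = sb.2] | sb in
        [set sb : nat * bool | (1 <= sb.1 <= t)%N] ] >>.

(* stopping times with values in N_0 u {oo}; None encodes oo *)
Definition le_opt (o : option nat) (t : nat) : bool :=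
  if o is Some s then (s <= t)%N else false.

Definition stopping_time (tau : Omega -> option nat) : Prop :=
  forall t : nat, F t [set w | le_opt (tau w) t].

Definition finite_at (tau : Omega -> option nat) : set Omega :=
  [set w | tau w != None].

(* the all-zeros path and the path 0^n 1 0^N (single 1 at position n+1) *)
Definition zeros : Omega := fun _ => false.
Definition spike (n : nat) : Omega := fun k => k == n.

Definition Pn {R : realType} (n : nat) (B : set Omega) : \bar R :=
  (2^-1 * (zeros \in B)%:R + 2^-1 * (spike n \in B)%:R)%:E.

Definition nu_star {R : realType} (B : set Omega) : \bar R :=
  ereal_sup [set @Pn R n B | n in [set: nat]].

Definition mu_star {R : realType} (B : set Omega) : \bar R :=
  ereal_inf [set ereal_sup [set @Pn R n (finite_at tau) | n in [set: nat]]
            | tau in [set tau | stopping_time tau /\ B `<=` finite_at tau]].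

Definition A : set Omega := [set zeros].

From HB Require Import structures.
From mathcomp Require Import all_boot all_order all_algebra.
From mathcomp Require Import classical_sets boolp functions reals ereal measure.
From mathcomp Require Import lra.
Local Open Scope classical_set_scope.
Local Open Scope ring_scope.
Local Open Scope ereal_scope.
Import Order.TTheory GRing.Theory Num.Theory.

(* Every P_n charges the all-zeros path with mass 1/2, so nu^*(A) = 1/2.  A
   stopping time finite at the zeros path stops at some time s, and since the
   event {tau <= s} only sees the first s coordinates, it is also finite at the
   spike 0^s 1 0^N, which P_s charges too: hence mu^*(A) = 1.  On the other
   hand the first time a 1 is observed is a stopping time finite exactly on
   the complement of A, which every P_n charges with mass 1/2. *)

Lemma F_prefix_invariant t (S : set Omega) : F t S ->
  forall w w', (forall k, (k < t)%N -> w k = w' k) -> S w -> S w'.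
Proof.
move=> FS.
(* The sets invariant under changes after time t form a sigma-algebra that
   contains the generators of F t. *)
pose C := [set S : set Omega | forall w w',
  (forall k, (k < t)%N -> w k = w' k) -> (S w <-> S w')].
suff CS : C S by move=> w w' ag /(CS w w' ag).
apply: (smallest_sub (X := C)) FS.
- split.
  + by move=> w w' _; split.
  + by move=> B CB w w' ag; rewrite /= (propext (CB _ _ ag)).
  + move=> B CB w w' ag; split=> -[n _ Bn]; exists n => //.
      by apply/(CB n _ _ ag).
    by apply/(CB n _ _ ag).
- move=> _ [[[|s] b] /andP[_ s_le] <-] // w w' ag /=.
  by rewrite /X ag.
Qed.

Lemma stopping_time_cst (o : option nat) : stopping_time (fun=> o).
Proof.
move=> t /=.
have [->|->] : [set _ : Omega | le_opt o t] = setT \/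
               [set _ : Omega | le_opt o t] = set0.
  by case: (le_opt o t); [left|right]; apply/seteqP; split.
- by rewrite -[X in F t X]setD0; apply: sigma_algebraCD; exact: sigma_algebra0.
- exact: sigma_algebra0.
Qed.

Lemma stopping_time_finite_spike (tau : Omega -> option nat) s :
  stopping_time tau -> tau zeros = Some s -> finite_at tau (spike s).
Proof.
move=> st tau0.
have : [set w | le_opt (tau w) s] (spike s).
  apply: (@F_prefix_invariant _ _ (st s) zeros); last by rewrite /= tau0 /=.
  by move=> k ks; rewrite /spike ltn_eqF.
by rewrite /finite_at /=; case: (tau (spike s)).
Qed.

(* [w k] is observed as X_(k+1), hence the successor. *)
Definition first_one (w : Omega) : option nat :=
  match pselect (exists k, w k) with
  | left h => Some (ex_minn h).+1
  | right _ => None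
  end.

Lemma first_one_stopping_time : stopping_time first_one.
Proof.
move=> t.
have -> : [set w | le_opt (first_one w) t] =
    \bigcup_k (if (k < t)%N then [set w : Omega | X k.+1 w = true] else set0).
  apply/seteqP; split => w /=.
    rewrite /first_one; case: pselect => // h.
    by case: ex_minnP => m wm _ /= mt; exists m => //; rewrite mt.
  move=> [k _]; case: ifP => // kt /= wk.
  rewrite /first_one; case: pselect => [h|]; last by case; exists k.
  by case: ex_minnP => m _ /(_ k wk) mk /=; exact: leq_ltn_trans kt.
apply: sigma_algebra_bigcup => k; case: ifP => kt; last exact: sigma_algebra0.
by apply: sub_sigma_algebra; exists (k.+1, true).
Qed.

Lemma finite_first_one : finite_at first_one = ~` A.
Proof.
apply/seteqP; split => w; rewrite /finite_at /first_one /=.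
- by case: pselect => // -[k wk] _ w0; rewrite w0 in wk.
- case: pselect => // nk nA; exfalso; apply: nA.
  by apply/funext => k; apply/negbTE/negP => wk; apply: nk; exists k.
Qed.

Lemma spike_neq_zeros n : spike n <> zeros.
Proof. by move=> /(congr1 (fun f => f n)); rewrite /spike eqxx. Qed.

Section upper_capacities.
Variable R : realType.

Lemma Pn_le1 n B : @Pn R n B <= 1.
Proof.
by rewrite /Pn lee_fin; case: (zeros \in B); case: (spike n \in B) => /=; lra.
Qed.

Lemma Pn_ge_half n B : B (spike n) -> (2^-1)%:E <= @Pn R n B.
Proof.
by move=> Bn; rewrite /Pn (mem_set Bn) lee_fin; case: (_ \in _) => /=; lra.
Qed.

Lemma Pn_full n B : B zeros -> B (spike n) -> @Pn R n B = 1.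
Proof.
move=> B0 Bn; rewrite /Pn (mem_set B0) (mem_set Bn) /=.
by rewrite -mulrDr -mulr2n -mulr_natr mulVf.
Qed.

Lemma Pn_A n : @Pn R n A = (2^-1)%:E.
Proof.
rewrite /Pn (mem_set (erefl : A zeros)) (memNset (spike_neq_zeros n : ~ A _)) /=.
by rewrite mulr0 addr0 mulr1.
Qed.

Lemma Pn_setC_A n : @Pn R n (~` A) = (2^-1)%:E.
Proof.
have notA0 : ~ (~` A) zeros by apply.
rewrite /Pn (memNset notA0) (mem_set (spike_neq_zeros n : (~` A) _)) /=.
by rewrite mulr0 add0r mulr1.
Qed.

Lemma sup_Pn_le1 B : ereal_sup [set @Pn R n B | n in [set: nat]] <= 1.
Proof. by apply: ge_ereal_sup => _ [n _ <-]; exact: Pn_le1. Qed.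

Lemma sup_Pn_cst B c : (forall n, @Pn R n B = c) ->
  ereal_sup [set @Pn R n B | n in [set: nat]] = c.
Proof.
move=> Pc; apply/le_anti/andP; split.
- by apply: ge_ereal_sup => _ [n _ <-]; rewrite Pc.
- by apply: ereal_sup_ubound; exists 0%N => //; rewrite Pc.
Qed.

Lemma sup_Pn_finite_zeros (tau : Omega -> option nat) :
  stopping_time tau -> finite_at tau zeros ->
  ereal_sup [set @Pn R n (finite_at tau) | n in [set: nat]] = 1.
Proof.
rewrite /finite_at /=; case tau0: (tau zeros) => [s|] // st _.
apply/le_anti; rewrite sup_Pn_le1 /=; apply: ereal_sup_ubound; exists s => //.
rewrite Pn_full //; last exact: stopping_time_finite_spike tau0.
by rewrite /finite_at /= tau0.
Qed.

Lemma mu_star_le B (tau : Omega -> option nat) :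
  stopping_time tau -> B `<=` finite_at tau ->
  @mu_star R B <= ereal_sup [set @Pn R n (finite_at tau) | n in [set: nat]].
Proof. by move=> st Btau; apply: ereal_inf_lbound; exists tau. Qed.

Lemma mu_star_ge B c :
  (forall tau, stopping_time tau -> B `<=` finite_at tau ->
     c <= ereal_sup [set @Pn R n (finite_at tau) | n in [set: nat]]) ->
  c <= @mu_star R B.
Proof. by move=> lb; apply: le_ereal_inf_tmp => _ [tau [st Btau] <-]; exact: lb. Qed.

End upper_capacities.

Theorem mainTheorem9 (R : realType) :
  [/\ @nu_star R A = (2^-1)%:E,
      @mu_star R A = 1 &
      @mu_star R (~` A) = (2^-1)%:E].
Proof.
split; first exact/sup_Pn_cst/Pn_A.
- apply/le_anti/andP; split.
    apply: le_trans (sup_Pn_le1 _ _).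
    by apply: (mu_star_le _ _ _ (stopping_time_cst (Some 0%N))) => w.
  apply: mu_star_ge => tau st A_fin.
  by rewrite sup_Pn_finite_zeros //; exact: A_fin.
- apply/le_anti/andP; split.
    have := mu_star_le R (~` A) _ first_one_stopping_time.
    by rewrite finite_first_one (sup_Pn_cst _ _ _ (Pn_setC_A R)); apply.
  apply: mu_star_ge => tau st notA_fin.
  apply: le_ereal_sup_tmp; exists (Pn 0 (finite_at tau)); first by exists 0%N.
  exact/Pn_ge_half/notA_fin/spike_neq_zeros.
Qed.
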